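(* For all $t\ge1$ and all $\mathbf{x}\in\mathcal{X}$, \[ |\sigma_{\mathrm{fb}[t]}(\mathbf{x})-\widetilde\sigma_{\mathrm{fb}[t]}(\mathbf{x})|\le\sqrt{(L+1)\varepsilon\Big(1+\frac{4\hat K_0^2t^2}{\sigma^4}\Big)}. \]
   Context: $\mathcal{X}$ is a finite subset of the unit ball of $\mathbb{R}^d$. $k$ is a kernel (the exact NTK) with $k(\mathbf{x},\mathbf{x}')\le K_0$ for all $\mathbf{x},\mathbf{x}'$, and $\widetilde k(\mathbf{x},\mathbf{x}')=\langle\nabla_\theta f(\mathbf{x};\theta_0),\nabla_\theta f(\mathbf{x}';\theta_0)\rangle$ is the empirical NTK of a network with $L+1$ layers at initialization $\theta_0$. It is assumed that $|\widetilde k(\mathbf{x},\mathbf{x}')-k(\mathbf{x},\mathbf{x}')|\le(L+1)\varepsilon$ for all $\mathbf{x},\mathbf{x}'\in\mathcal{X}$, that $(L+1)\varepsilon\le1$ and that $\sigma^2\le1$; $\hat K_0=\max\{1,K_0\}$. Queries $\mathbf{x}_1,\mathbf{x}_2,\dots$ are indexed sequentially and $\mathrm{fb}[t]\le t-1$ is the number of observed queries when $\mathbf{x}_t$ is chosen. $\sigma^2_{\mathrm{fb}[t]}(\mathbf{x})=k(\mathbf{x},\mathbf{x})-\mathbf{k}_t(\mathbf{x})^\top(\mathbf{K}_t+\sigma^2I)^{-1}\mathbf{k}_t(\mathbf{x})$ with $\mathbf{k}_t(\mathbf{x})=(k(\mathbf{x},\mathbf{x}_\tau))_{\tau\le\mathrm{fb}[t]}$,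 $\mathbf{K}_t=(k(\mathbf{x}_\tau,\mathbf{x}_{\tau'}))_{\tau,\tau'\le\mathrm{fb}[t]}$; $\widetilde\sigma^2_{\mathrm{fb}[t]}$ is defined identically with $\widetilde k$ in place of $k$. *)

From mathcomp Require Import all_boot all_order all_algebra.
Set Implicit Arguments. Unset Strict Implicit. Unset Printing Implicit Defensive.
Import Order.TTheory GRing.Theory Num.Theory.
Local Open Scope ring_scope.

Section GP.
Variables (R : rcfType) (d : nat).
Notation V := 'rV[R]_d.

Definition gram (k : V -> V -> R) (n : nat) (pts : 'I_n -> V) : 'M[R]_n :=
  \matrix_(i, j) k (pts i) (pts j).

Definition kvec (k : V -> V -> R) (n : nat) (pts : 'I_n -> V) (x : V) : 'cV[R]_n :=
  \col_i k x (pts i).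

Definition post_var (k : V -> V -> R) (s2 : R) (n : nat) (pts : 'I_n -> V) (x : V) : R :=
  k x x - ((kvec k pts x)^T *m invmx (gram k pts + s2%:M) *m kvec k pts x) 0 0.

(* the observed queries x_1, ..., x_n (queries are 1-indexed) *)
Definition obs (xs : nat -> V) (n : nat) : 'I_n -> V := fun i => xs (i.+1)%N.

(* empirical kernel induced by a feature map (e.g. the gradient at theta_0) *)
Definition feat_kernel (p : nat) (g : V -> 'rV[R]_p) : V -> V -> R :=
  fun x x' => (g x *m (g x')^T) 0 0.

Definition psd_kernel_on (X : seq V) (k : V -> V -> R) : Prop :=
  (forall x x', x \in X -> x' \in X -> k x x' = k x' x) /\
  (forall (n : nat) (pts : 'I_n -> V), (forall i, pts i \in X) ->
     forall c : 'cV[R]_n, 0 <= (c^T *m gram k pts *m c) 0 0).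

Definition in_unit_ball (x : V) : Prop := \sum_i (x 0 i) ^+ 2 <= 1.
End GP.
Arguments obs {R d} xs n _.

From mathcomp Require Import all_boot all_order all_algebra.
From mathcomp Require Import ring lra.
Set Implicit Arguments. Unset Strict Implicit. Unset Printing Implicit Defensive.
Import Order.TTheory GRing.Theory Num.Theory.
Local Open Scope ring_scope.

(** Let u = (K + s I)^-1 k(x) and v = (K' + s I)^-1 k'(x) for the exact and
    empirical Gram matrices and kernel vectors.  Using A u = k(x), B v = k'(x)
    and the symmetry of A = K + s I, the difference of the two quadratic forms
    k(x)^T u - k'(x)^T v equals u.(k - k') + u^T (K' - K) v + (k - k').v, so it
    is at most (L+1) eps (|u|_1 + |v|_1 + |u|_1 |v|_1).  Positive
    semidefiniteness gives s |u|_2^2 <= u.k(x) <= Khat |u|_1, and AM-GM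
    coordinatewise turns this into |u|_1 <= n Khat / s (and likewise for v with
    2 Khat).  Finally |sqrt a - sqrt b| <= sqrt |a - b|. *)

(* No sign condition is needed: [Num.sqrt] maps negative numbers to 0. *)
Lemma ler_dist_sqrt (R : rcfType) (a b : R) :
  `|Num.sqrt a - Num.sqrt b| <= Num.sqrt `|a - b|.
Proof.
rewrite -[leLHS]sqrtr_sqr; apply: ler_wsqrtr.
have sqr_le : `|Num.sqrt a ^+ 2 - Num.sqrt b ^+ 2| <= `|a - b|.
  case: sqrtrP => [a0|p p0]; case: sqrtrP => [b0|q q0];
    rewrite ?expr0n /= ?subr0 ?sub0r ?normrN //.
  - by rewrite normr0.
  - have q2 := sqr_ge0 q; rewrite distrC (ger0_norm q2).
    by rewrite ger0_norm; lra.
  - have p2 := sqr_ge0 p; rewrite (ger0_norm p2).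
    by rewrite ger0_norm; lra.
apply: le_trans sqr_le.
have := sqrtr_ge0 a; have := sqrtr_ge0 b.
set p := Num.sqrt a; set q := Num.sqrt b => q0 p0.
have [pq|qp] := lerP p q.
- rewrite distrC ger0_norm; last by rewrite subr_ge0; nra.
  nra.
- rewrite ger0_norm; last by rewrite subr_ge0; nra.
  nra.
Qed.

Section Bilinear.
Variables (R : comPzRingType) (n : nat).
Implicit Types (u v : 'cV[R]_n) (D : 'M[R]_n).

Lemma dotmxE u v : (u^T *m v) 0 0 = \sum_i u i 0 * v i 0.
Proof. by rewrite mxE; apply: eq_bigr => i _; rewrite mxE. Qed.

Lemma dotmxC u v : (u^T *m v) 0 0 = (v^T *m u) 0 0.
Proof. by rewrite !dotmxE; apply: eq_bigr => i _; rewrite mulrC. Qed.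

Lemma qformE u D v :
  (u^T *m D *m v) 0 0 = \sum_j (\sum_i u i 0 * D i j) * v j 0.
Proof.
rewrite mxE; apply: eq_bigr => j _; rewrite mxE; congr (_ * _).
by apply: eq_bigr => i _; rewrite mxE.
Qed.

Lemma qform_addsc u D (s : R) :
  (u^T *m (D + s%:M) *m u) 0 0 = (u^T *m D *m u) 0 0 + s * \sum_i u i 0 ^+ 2.
Proof.
rewrite mulmxDr mulmxDl mxE; congr (_ + _).
by rewrite mul_mx_scalar -scalemxAl mxE dotmxE mulr_sumr.
Qed.
End Bilinear.

Section InverseQuadraticForm.
Variables (R : comUnitRingType) (n : nat).

Lemma qform_invmx_diff (A B : 'M[R]_n) (a b : 'cV[R]_n) :
  A^T = A -> A \in unitmx -> B \in unitmx ->
  let u := invmx A *m a in let v := invmx B *m b in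
  (a^T *m invmx A *m a) 0 0 - (b^T *m invmx B *m b) 0 0 =
  (u^T *m (a - b)) 0 0 + (u^T *m (B - A) *m v) 0 0 + ((a - b)^T *m v) 0 0.
Proof.
move=> symA unitA unitB u v.
have trmx11 (M : 'M[R]_1) : M^T = M by rewrite [M]mx11_scalar tr_scalar_mx.
have uA : u^T *m A = a^T by rewrite -{1}symA -trmx_mul mulKVmx.
have Bv : B *m v = b by rewrite mulKVmx.
(* Both sides reduce to u^T a - b^T v. *)
suff : a^T *m invmx A *m a - b^T *m invmx B *m b =
  u^T *m (a - b) + u^T *m (B - A) *m v + (a - b)^T *m v.
  by move/(congr1 (fun M : 'M[R]_1 => M 0 0)); rewrite !mxE.
rewrite !mulmxBr [(a - b)^T]linearB /= !mulmxBl -[u^T *m B *m v]mulmxA Bv uA.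
rewrite -[a^T *m _ *m a]mulmxA -[b^T *m _ *m b]mulmxA -/u -/v.
rewrite -[a^T *m u]trmx11 trmx_mul trmxK.
by rewrite !addrA subrK subrK.
Qed.
End InverseQuadraticForm.

Section PsdPerturbation.
Variables (R : realFieldType) (n : nat).
Implicit Types (u v a : 'cV[R]_n) (D K : 'M[R]_n).

Definition psd_mx K := forall c : 'cV[R]_n, 0 <= (c^T *m K *m c) 0 0.

Definition l1norm u := \sum_i `|u i 0|.

Lemma l1norm_ge0 u : 0 <= l1norm u.
Proof. by apply: sumr_ge0 => i _; apply: normr_ge0. Qed.

Lemma norm_dotmx_le u v (c : R) :
  (forall i, `|v i 0| <= c) -> `|(u^T *m v) 0 0| <= c * l1norm u.
Proof.
move=> vc; rewrite dotmxE mulr_sumr; apply: le_trans (ler_norm_sum _ _ _) _.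
by apply: ler_sum => i _; rewrite normrM mulrC ler_wpM2r.
Qed.

Lemma norm_qform_le u D v (c : R) :
  (forall i j, `|D i j| <= c) -> `|(u^T *m D *m v) 0 0| <= c * l1norm u * l1norm v.
Proof.
move=> Dc; rewrite qformE mulr_sumr; apply: le_trans (ler_norm_sum _ _ _) _.
apply: ler_sum => j _; rewrite normrM ler_wpM2r // mulr_sumr.
apply: le_trans (ler_norm_sum _ _ _) _.
by apply: ler_sum => i _; rewrite normrM mulrC ler_wpM2r.
Qed.

Lemma psd_addsc_unitmx K (s : R) : 0 < s -> psd_mx K -> K + s%:M \in unitmx.
Proof.
move=> s0 psdK; rewrite unitmxE unitfE; apply/negP => /det0P [v v_neq0 vA0].
have sum0 : \sum_i v^T i 0 ^+ 2 = 0.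
  have := qform_addsc v^T K s; rewrite trmxK vA0 mul0mx mxE.
  have := psdK v^T; rewrite trmxK.
  have : 0 <= \sum_i v^T i 0 ^+ 2 by apply: sumr_ge0 => i _; apply: sqr_ge0.
  nra.
suff v0 : v = 0 by rewrite v0 eqxx in v_neq0.
apply/matrixP => i j; rewrite (ord1 i) mxE.
have /eqP := psumr_eq0P (fun j _ => sqr_ge0 (v^T j 0)) sum0 (i:=j) isT.
by rewrite sqrf_eq0 mxE => /eqP.
Qed.

Lemma l1norm_psd_solve_le K a (s M : R) :
  0 < s -> 0 < M -> psd_mx K -> (forall i, `|a i 0| <= M) ->
  l1norm (invmx (K + s%:M) *m a) <= n%:R * M / s.
Proof.
move=> s0 M0 psdK aM; set u := invmx _ *m a; set N2 := \sum_i u i 0 ^+ 2.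
have Au : (K + s%:M) *m u = a by rewrite mulKVmx // psd_addsc_unitmx.
have energy_le : s * N2 <= M * l1norm u.
  have := psdK u; have := qform_addsc u K s; rewrite -mulmxA Au.
  have := norm_dotmx_le u aM; rewrite ler_norml -/N2 => /andP[_]; lra.
have amgm : 2 * M * s * l1norm u <= s ^+ 2 * N2 + n%:R * M ^+ 2.
  have -> : n%:R * M ^+ 2 = \sum_(i < n) M ^+ 2.
    by rewrite sumr_const card_ord mulr_natl.
  rewrite /l1norm /N2 !mulr_sumr -big_split /=; apply: ler_sum => i _.
  have := sqr_ge0 (s * `|u i 0| - M); rewrite -[u i 0 ^+ 2]real_normK ?num_real //.
  nra.
rewrite ler_pdivlMr // -(ler_pM2l M0); nra.
Qed.

Lemma qform_invmx_perturb K K' a a' (s dl M M' : R) :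
  0 < s -> 0 < M -> 0 < M' -> 0 <= dl -> K^T = K -> psd_mx K -> psd_mx K' ->
  (forall i j, `|K' i j - K i j| <= dl) -> (forall i, `|a i 0 - a' i 0| <= dl) ->
  (forall i, `|a i 0| <= M) -> (forall i, `|a' i 0| <= M') ->
  `|(a^T *m invmx (K + s%:M) *m a) 0 0 - (a'^T *m invmx (K' + s%:M) *m a') 0 0|
   <= dl * (n%:R * M / s + n%:R * M' / s + n%:R * M / s * (n%:R * M' / s)).
Proof.
move=> s0 M0 M'0 dl0 symK psdK psdK' dK da aM a'M'.
rewrite qform_invmx_diff ?psd_addsc_unitmx //; last first.
  by rewrite linearD /= symK tr_scalar_mx.
set u := invmx _ *m a; set v := invmx _ *m a'.
have uX := l1norm_psd_solve_le s0 M0 psdK aM.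
have vY := l1norm_psd_solve_le s0 M'0 psdK' a'M'.
have dKK' : forall i j, `|(K' + s%:M - (K + s%:M)) i j| <= dl.
  by move=> i j; rewrite opprD addrACA subrr addr0 !mxE.
have da' : forall i, `|(a - a') i 0| <= dl by move=> i; rewrite !mxE.
apply: le_trans (ler_normD _ _) _; apply: le_trans (lerD (ler_normD _ _) (lexx _)) _.
rewrite [((a - a')^T *m v) 0 0]dotmxC.
have T1 := norm_dotmx_le u da'; have T2 := norm_qform_le u v dKK'.
have T3 := norm_dotmx_le v da'.
have uv := ler_pM (l1norm_ge0 u) (l1norm_ge0 v) uX vY.
have u0 := l1norm_ge0 u; have v0 := l1norm_ge0 v; nra.
Qed.
End PsdPerturbation.

Section KernelPerturbation.
Variables (R : rcfType) (d : nat).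
Implicit Types (X : seq 'rV[R]_d) (k : 'rV[R]_d -> 'rV[R]_d -> R).

Lemma feat_kernel_gram_psd p (g : 'rV[R]_d -> 'rV[R]_p) n (pts : 'I_n -> 'rV[R]_d) :
  psd_mx (gram (feat_kernel g) pts).
Proof.
move=> c; set F := \matrix_(i, l) g (pts i) 0 l.
have -> : gram (feat_kernel g) pts = F *m F^T.
  apply/matrixP => i j; rewrite /feat_kernel !mxE.
  by apply: eq_bigr => l _; rewrite !mxE.
have -> : c^T *m (F *m F^T) *m c = (F^T *m c)^T *m (F^T *m c).
  by rewrite trmx_mul trmxK !mulmxA.
by rewrite dotmxE; apply: sumr_ge0 => i _; rewrite -expr2 sqr_ge0.
Qed.

Lemma psd_kernel_norm_le X k (K : R) y z :
  psd_kernel_on X k -> (forall x x', x \in X -> x' \in X -> k x x' <= K) ->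
  y \in X -> z \in X -> `|k y z| <= K.
Proof.
case=> symk psdk kK yX zX.
pose yz (i : 'I_2) := if i == 0 :> nat then y else z.
have yzX i : yz i \in X by rewrite /yz; case: ifP.
(* Testing against (1, 1): k y y + 2 k y z + k z z >= 0. *)
have := psdk 2 yz yzX (const_mx 1).
rewrite qformE !big_ord_recl !big_ord0 !mxE /yz /= (symk z y) //.
have := kK _ _ yX yX; have := kK _ _ zX zX; have := kK _ _ yX zX.
rewrite ler_norml; lra.
Qed.

Lemma post_var_perturb X k k' (K dl s : R) n (pts : 'I_n -> 'rV[R]_d) x :
  psd_kernel_on X k -> psd_mx (gram k' pts) ->
  (forall y z, y \in X -> z \in X -> `|k y z| <= K) ->
  (forall y z, y \in X -> z \in X -> `|k' y z - k y z| <= dl) ->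
  dl <= K -> 0 < K -> 0 < s -> (forall i, pts i \in X) -> x \in X ->
  `|post_var k s pts x - post_var k' s pts x|
    <= dl * (1 + 3 * (n%:R * K / s) + 2 * (n%:R * K / s) ^+ 2).
Proof.
move=> [symk psdk] psdk' kK dk dlK K0 s0 ptsX xX.
have dl0 : 0 <= dl by apply: le_trans (dk x x xX xX).
have k'K y z : y \in X -> z \in X -> `|k' y z| <= 2 * K.
  move=> yX zX; rewrite -(subrK (k y z) (k' y z)).
  apply: le_trans (ler_normD _ _) _.
  by have := dk y z yX zX; have := kK y z yX zX; lra.
have symG : (gram k pts)^T = gram k pts.
  by apply/matrixP => i j; rewrite !mxE symk.
have dG i j : `|gram k' pts i j - gram k pts i j| <= dl by rewrite !mxE dk.
have da i : `|kvec k pts x i 0 - kvec k' pts x i 0| <= dl by rewrite !mxE distrC dk.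
have ka i : `|kvec k pts x i 0| <= K by rewrite !mxE kK.
have k'a i : `|kvec k' pts x i 0| <= 2 * K by rewrite !mxE k'K.
have K2 : 0 < 2 * K by rewrite mulr_gt0.
have := qform_invmx_perturb s0 K0 K2 dl0 symG (psdk n pts ptsX) psdk' dG da ka k'a.
rewrite (_ : n%:R * (2 * K) / s = 2 * (n%:R * K / s)); last by ring.
rewrite /post_var; set q := (_ *m _ *m _) 0 0; set q' := (_ *m _ *m _) 0 0 => q_le.
have -> : k x x - q - (k' x x - q') = (k x x - k' x x) - (q - q') by ring.
apply: le_trans (ler_normB _ _) _; have := dk x x xX xX; rewrite distrC; lra.
Qed.
End KernelPerturbation.

Lemma perturbation_factor_le (R : realFieldType) (W : R) (m t : nat) :
  1 <= W -> (m < t)%N ->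
  1 + 3 * (m%:R * W) + 2 * (m%:R * W) ^+ 2 <= 1 + 4 * W ^+ 2 * t%:R ^+ 2.
Proof.
move=> W1 mt; have m0 := ler0n R m.
have mt2 : (m%:R + 1) ^+ 2 <= t%:R ^+ 2 :> R.
  have : m%:R + 1 <= t%:R :> R by rewrite natr1 ler_nat.
  nra.
have W0 : 0 <= W by apply: le_trans W1.
have mWW : 0 <= m%:R * W * (W - 1).
  by apply: mulr_ge0 (mulr_ge0 m0 W0) _; rewrite subr_ge0.
have := ler_wpM2l (sqr_ge0 W) mt2; nra.
Qed.

Theorem lemma9 (R : rcfType) (d p L : nat) (X : seq 'rV[R]_d)
  (k : 'rV[R]_d -> 'rV[R]_d -> R) (g : 'rV[R]_d -> 'rV[R]_p)
  (K0 eps sigma : R) (xs : nat -> 'rV[R]_d) (fb : nat -> nat) :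
  (forall x, x \in X -> in_unit_ball x) ->
  psd_kernel_on X k ->
  (forall x x', x \in X -> x' \in X -> k x x' <= K0) ->
  (forall x x', x \in X -> x' \in X ->
     `|feat_kernel g x x' - k x x'| <= (L + 1)%:R * eps) ->
  (L + 1)%:R * eps <= 1 ->
  0 < sigma -> sigma ^+ 2 <= 1 ->
  (forall t, (1 <= t)%N -> xs t \in X) ->
  (forall t, (1 <= t)%N -> (fb t <= t.-1)%N) ->
  forall t, (1 <= t)%N -> forall x, x \in X ->
    let Khat := Num.max 1 K0 in
    `| Num.sqrt (post_var k (sigma ^+ 2) (obs xs (fb t)) x)
       - Num.sqrt (post_var (feat_kernel g) (sigma ^+ 2) (obs xs (fb t)) x) |
    <= Num.sqrt ((L + 1)%:R * eps
                 * (1 + 4%:R * Khat ^+ 2 * (t%:R) ^+ 2 / sigma ^+ 4)).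
Proof.
move=> _ psdk kK0 dk dl1 sigma0 sigma1 xsX fbt t t1 x xX; cbv zeta.
set Khat := Num.max 1 K0.
have Khat1 : 1 <= Khat by rewrite le_max lexx.
have kK y z : y \in X -> z \in X -> `|k y z| <= Khat.
  move=> yX zX; apply: le_trans (psd_kernel_norm_le psdk kK0 yX zX) _.
  by rewrite le_max lexx orbT.
have fbt_lt : (fb t < t)%N by rewrite (leq_ltn_trans (fbt t t1)) // prednK.
have s0 : 0 < sigma ^+ 2 by rewrite exprn_gt0.
apply: le_trans (ler_dist_sqrt _ _) _; apply: ler_wsqrtr.
have obsX i : obs xs (fb t) i \in X by apply: xsX.
apply: le_trans (post_var_perturb psdk (feat_kernel_gram_psd g _) kK dk
  (le_trans dl1 Khat1) (lt_le_trans ltr01 Khat1) s0 obsX xX) _.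
apply: ler_wpM2l; first exact: le_trans (normr_ge0 _) (dk x x xX xX).
have W1 : 1 <= Khat / sigma ^+ 2 by rewrite ler_pdivlMr // mul1r (le_trans sigma1).
have -> : 4%:R * Khat ^+ 2 * t%:R ^+ 2 / sigma ^+ 4 =
          4 * (Khat / sigma ^+ 2) ^+ 2 * t%:R ^+ 2 by field; rewrite gt_eqF.
by rewrite -mulrA perturbation_factor_le.
Qed.
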